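(* For every prime power $q$ and every integer $h\geq 2$, there exists a $2$-fold blocking set of size $2(q^h+q^{h-1}+1)$ in $\mathrm{PG}(2,q^h)$.
   Context: A $2$-fold blocking set is a point set meeting every line in at least $2$ points. *)

(* The projective plane PG(2,F) over a finite field F,
   modelled via the row-space theory of mxalgebra: a point is a
   1-dimensional subspace of F^3, a line a 2-dimensional subspace,
   each represented canonically by its generated matrix <<A>>%MS. *)
From HB Require Import structures.
From mathcomp Require Import all_boot all_order all_algebra.
Set Implicit Arguments. Unset Strict Implicit. Unset Printing Implicit Defensive.
Import GRing.Theory.
Local Open Scope ring_scope.

Definition is_prime_power (q : nat) : Prop :=
  exists p k : nat, prime p /\ (0 < k)%N /\ q = (p ^ k)%N.

Definition PG2_points (F : finFieldType) : {set 'M[F]_3} :=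
  [set <<A>>%MS | A : 'M[F]_3 & \rank A == 1%N].

Definition PG2_lines (F : finFieldType) : {set 'M[F]_3} :=
  [set <<A>>%MS | A : 'M[F]_3 & \rank A == 2%N].

Definition PG2_incident (F : finFieldType) (P L : 'M[F]_3) : bool :=
  (P <= L)%MS.

Definition t_fold_blocking_set (F : finFieldType) (t : nat) (B : {set 'M[F]_3}) : Prop :=
  B \subset PG2_points F /\
  forall L, L \in PG2_lines F -> (t <= #|[set P in B | PG2_incident P L]|)%N.

(* Write Q = q^h and let T be the trace from GF(Q) onto GF(q).  The points
   <(x, T x, t)>, x in GF(Q), t in GF(q), form a blocking set B1: a line is
   the kernel of a linear form, and two of the 2Q vectors (x, T x, b) with
   b in {0, 1} take the same value on it, so their difference lies on the line.
   Normalising coordinates shows |B1| <= Q + Q/q + 1.  The same argument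
   applies to B2 = {<(t, G z + alpha t, z)>} with G z = rho z + alpha T(beta z);
   for alpha, rho, beta chosen by counting fibres of T, no point of B2 lies in
   B1.  So the union of B1 and B2 is a 2-fold blocking set of at most
   2(Q + Q/q + 1) points, and adding further points keeps it 2-fold blocking. *)
From HB Require Import structures.
From mathcomp Require Import all_boot all_order all_algebra all_field.
From mathcomp Require Import ring zify.
Set Implicit Arguments. Unset Strict Implicit. Unset Printing Implicit Defensive.
Import GRing.Theory.
Local Open Scope ring_scope.

Lemma card_bigcup_leq (I T : finType) (P : {pred I}) (A : I -> {set T}) :
  (#|\bigcup_(i in P) A i| <= \sum_(i in P) #|A i|)%N.
Proof.
apply: (big_rec2 (fun (U : {set T}) n => #|U| <= n)%N); first by rewrite cards0.
by move=> i U n _ leUn; rewrite (leq_trans (leq_card_setU _ _)) ?leq_add2l.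
Qed.

Lemma exists_set_between (T : finType) (A C : {set T}) n :
  A \subset C -> (#|A| <= n <= #|C|)%N ->
  exists B : {set T}, [/\ A \subset B, B \subset C & #|B| = n].
Proof.
move=> sAC; elim: n => [|n IHn] /andP[leAn lenC].
  by exists A; split=> //; apply/eqP; rewrite -leqn0.
have [eqAn | ltAn] := eqVneq #|A| n.+1; first by exists A.
have [|B [sAB sBC cardB]] := IHn; first by apply/andP; split; lia.
have [x /setDP[xC xB]] : exists x, x \in C :\: B.
  by apply/set0Pn; rewrite -card_gt0 cardsD (setIidPr sBC) cardB subn_gt0.
exists (x |: B); split; first exact: subset_trans sAB (subsetUr _ _).
  by rewrite subUset sub1set xC.
by rewrite cardsU1 xB cardB.
Qed.

Lemma card_roots_lt (R : finIdomainType) (p : {poly R}) :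
  p != 0 -> (#|[pred x | root p x]| < size p)%N.
Proof.
move=> p_neq0; rewrite cardE max_poly_roots ?enum_uniq //.
by apply/allP => x; rewrite mem_enum.
Qed.

Section ProjectivePlane.
Variable F : finFieldType.

Definition vec3 (a b c : F) : 'rV[F]_3 := \row_(j < 3) [:: a; b; c]`_j.

Lemma vec3_inj a b c a' b' c' :
  vec3 a b c = vec3 a' b' c' -> [/\ a = a', b = b' & c = c'].
Proof.
move=> /rowP eq_v; have := eq_v 0; have := eq_v 1; have := eq_v 2%:R.
by rewrite !mxE => ? ? ?.
Qed.

Lemma scale_vec3 k a b c : k *: vec3 a b c = vec3 (k * a) (k * b) (k * c).
Proof. by apply/rowP => i; rewrite !mxE; case: i => -[|[|[|]]]. Qed.

Lemma vec3B a b c a' b' c' :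
  vec3 a b c - vec3 a' b' c' = vec3 (a - a') (b - b') (c - c').
Proof. by apply/rowP => i; rewrite !mxE; case: i => -[|[|[|]]]. Qed.

Lemma vec3_eq0 a b c : (vec3 a b c == 0) = [&& a == 0, b == 0 & c == 0].
Proof.
have -> : 0 = vec3 0 0 0 :> 'rV[F]_3.
  by apply/rowP => i; rewrite !mxE; case: i => -[|[|[|]]].
by apply/eqP/and3P => [/vec3_inj[-> -> ->] | [/eqP-> /eqP-> /eqP->]].
Qed.

Lemma genmx_vec3P a b c a' b' c' :
  <<vec3 a b c>>%MS = <<vec3 a' b' c'>>%MS ->
  exists k, [/\ a = k * a', b = k * b' & c = k * c'].
Proof.
move=> /genmxP/andP[/sub_rVP[k]]; rewrite scale_vec3 => /vec3_inj ? _.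
by exists k.
Qed.

Lemma genmx_scale k (v : 'rV[F]_3) : k != 0 -> <<k *: v>>%MS = <<v>>%MS.
Proof. by move=> k_neq0; apply/eq_genmx/eqmx_scale. Qed.

Lemma genmx_PG2_point (v : 'rV[F]_3) : v != 0 -> <<v>>%MS \in PG2_points F.
Proof.
move=> v_neq0; apply/imsetP; exists <<v>>%MS; last by rewrite genmx_id.
by rewrite inE mxrank_gen rank_rV v_neq0.
Qed.

Lemma PG2_incident_genmx (v : 'rV[F]_3) L : PG2_incident <<v>>%MS L = (v <= L)%MS.
Proof. by rewrite /PG2_incident genmxE. Qed.

Lemma card_PG2_points : (#|F| ^ 2 <= #|PG2_points F|)%N.
Proof.
pose P (u : F * F) := <<vec3 u.1 u.2 1>>%MS.
have P_inj : injective P.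
  move=> [a b] [a' b']; rewrite /P /= => /genmx_vec3P[k [-> -> /esym]].
  by rewrite mulr1 => ->; rewrite !mul1r.
rewrite -mulnn -card_prod -cardsT -(card_imset _ P_inj) subset_leq_card //.
apply/subsetP => _ /imsetP[u _ ->]; apply: genmx_PG2_point.
by rewrite vec3_eq0 oner_eq0 !andbF.
Qed.

Lemma PG2_line_kernel L : L \in PG2_lines F ->
  exists r (c : 'M[F]_(3, r)), #|{: 'M[F]_(1, r)}| = #|F| /\
    forall w : 'rV[F]_3, (w <= L)%MS = (w *m c == 0).
Proof.
case/imsetP=> A; rewrite inE => /eqP rankA ->; set C := cokermx <<A>>%MS.
have rankC : \rank C = 1%N by rewrite mxrank_coker mxrank_gen rankA.
exists (\rank C), (col_base C); split; first by rewrite card_mx rankC.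
move=> w; rewrite submxE -/C.
have -> : w *m C = w *m col_base C *m row_base C by rewrite -mulmxA mulmx_base.
apply/eqP/eqP => [|->]; last by rewrite mul0mx.
by rewrite -(mul0mx _ (row_base C)) => /(row_free_inj (row_base_free C)).
Qed.

Lemma t_fold_blocking_setS t (A B : {set 'M[F]_3}) :
  t_fold_blocking_set t A -> A \subset B -> B \subset PG2_points F ->
  t_fold_blocking_set t B.
Proof.
move=> [_ blockA] sAB sBP; split=> // L /blockA /leq_trans-> //.
by apply/subset_leq_card/subsetP => P; rewrite !inE => /andP[/(subsetP sAB)-> ->].
Qed.

Lemma t_fold_blocking_setU s t (A B : {set 'M[F]_3}) :
  t_fold_blocking_set s A -> t_fold_blocking_set t B -> [disjoint A & B] ->
  t_fold_blocking_set (s + t) (A :|: B).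
Proof.
move=> [sAP blockA] [sBP blockB] disjAB; split; first by rewrite subUset sAP.
move=> L L_line; rewrite setIdE setIUl cardsU setIACA setIid.
by rewrite (disjoint_setI0 disjAB) set0I cards0 subn0 -!setIdE leq_add ?blockA ?blockB.
Qed.

Definition param_points (V : F * F -> 'rV[F]_3) (S : {pred F}) : {set 'M[F]_3} :=
  [set <<V u>>%MS | u : F * F & (u.2 \in S) && (V u != 0)].

Lemma param_points_blocking V S :
  {morph V : u v / u - v} -> injective V -> 0 \in S -> 1 \in S -> -1 \in S ->
  t_fold_blocking_set 1 (param_points V S).
Proof.
move=> VB V_inj S0 S1 SN1; split.
  apply/subsetP => P /imsetP[u]; rewrite inE => /andP[_ Vu_neq0] ->.
  exact: genmx_PG2_point.
move=> L /PG2_line_kernel[r [c [card_r ker_c]]].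
pose g (u : F * bool) := V (u.1, u.2%:R) *m c.
have /injectivePn[[x b] [[x' b'] neq_u eq_g]] : ~~ injectiveb g.
  apply/injectiveP => /leq_card; rewrite card_r card_prod card_bool muln2 -addnn.
  rewrite -[X in (_ <= X)%N]addn0 leq_add2l leqn0; apply/negP; rewrite -lt0n.
  by apply/card_gt0P; exists 0.
have u2S : b%:R - b'%:R \in S.
  by case: b b' {neq_u eq_g} => -[]; rewrite ?subrr ?subr0 ?sub0r.
pose u : F * F := (x, b%:R) - (x', b'%:R).
have V0 : V 0 = 0 by rewrite -[0]subr0 VB subrr.
have Vu_neq0 : V u != 0.
  rewrite -V0; apply: contra_neq neq_u => /V_inj /eqP.
  rewrite subr_eq0 xpair_eqE => /andP[/eqP-> ].
  by case: b b' {eq_g u u2S} => -[]; rewrite //= ?oner_eq0 // eq_sym oner_eq0.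
rewrite card_gt0; apply/set0Pn; exists <<V u>>%MS; rewrite inE PG2_incident_genmx ker_c.
apply/andP; split; first by apply/imsetP; exists u; rewrite ?inE ?u2S.
by rewrite VB mulmxBl subr_eq0; apply/eqP; exact: eq_g.
Qed.

End ProjectivePlane.

Section Trace.
Variables (F : finFieldType) (q h : nat).
Hypothesis q_pchar : [pchar F].-nat q.
Hypothesis cardF : #|F| = (q ^ h)%N.
Hypothesis h_gt1 : (1 < h)%N.

Lemma q_gt1 : (1 < q)%N.
Proof.
have [q_gt0 _] := andP q_pchar; rewrite ltn_neqAle q_gt0 andbT eq_sym.
by apply: contraTneq (card_finNzRing_gt1 F) => q1; rewrite cardF q1 exp1n.
Qed.

Lemma exprD_q i (x y : F) : (x + y) ^+ (q ^ i) = x ^+ (q ^ i) + y ^+ (q ^ i).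
Proof. by apply: exprDn_pchar; rewrite pnatX q_pchar. Qed.

Lemma exprB_q i (x y : F) : (x - y) ^+ (q ^ i) = x ^+ (q ^ i) - y ^+ (q ^ i).
Proof. by rewrite -[in RHS](subrK y x) (exprD_q i (x - y) y) addrK. Qed.

Definition Fq : {pred F} := [pred x | x ^+ q == x].

Lemma Fq_divring_closed : divring_closed Fq.
Proof.
split=> [|x y|x y]; rewrite !inE ?expr1n // => /eqP xq /eqP yq.
  by have := exprB_q 1 x y; rewrite expn1 xq yq => ->.
by rewrite exprMn exprVn xq yq.
Qed.

HB.instance Definition _ := GRing.isDivringClosed.Build F Fq Fq_divring_closed.

Lemma Fq_expq k i : k \in Fq -> k ^+ (q ^ i) = k.
Proof.
move=> /eqP kq; elim: i => [|i IHi]; first by rewrite expn0 expr1.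
by rewrite expnSr exprM IHi kq.
Qed.

Lemma card_Fq : (#|Fq| <= q)%N.
Proof.
have size_p : size ('X^q - 'X : {poly F}) = q.+1.
  by rewrite size_polyDl size_polyXn // size_polyN size_polyX ltnS q_gt1.
have p_neq0 : 'X^q - 'X != 0 :> {poly F} by rewrite -size_poly_eq0 size_p.
rewrite -ltnS -size_p (leq_trans _ (card_roots_lt p_neq0)) // ltnS.
by apply/subset_leq_card/subsetP => x; rewrite !inE /root !hornerE subr_eq0.
Qed.

Definition trace (x : F) : F := \sum_(i < h) x ^+ (q ^ i).

Lemma traceB x y : trace (x - y) = trace x - trace y.
Proof. by rewrite /trace -sumrB; apply: eq_bigr => i _; rewrite exprB_q. Qed.

Lemma trace0 : trace 0 = 0.
Proof. by have := traceB 0 0; rewrite subrr => ->; rewrite subrr. Qed.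

Lemma traceN x : trace (- x) = - trace x.
Proof. by rewrite -sub0r traceB trace0 sub0r. Qed.

Lemma traceZ k x : k \in Fq -> trace (k * x) = k * trace x.
Proof.
move=> kFq; rewrite /trace mulr_sumr.
by apply: eq_bigr => i _; rewrite exprMn (Fq_expq i kFq).
Qed.

(* The Frobenius map permutes the summands of the trace cyclically. *)
Lemma trace_Fq x : trace x \in Fq.
Proof.
have expq_sum (I : finType) (f : I -> F) : (\sum_i f i) ^+ q = \sum_i f i ^+ q.
  by apply: (big_morph _ (exprD_q 1)) ; rewrite expr0n gtn_eqF // ltnW // q_gt1.
rewrite inE /trace expq_sum; apply/eqP.
have [h' def_h] : exists h', h = h'.+1 by exists h.-1; rewrite prednK // ltnW.
rewrite def_h big_ord_recr big_ord_recl /= -exprM -expnSr.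
rewrite -def_h -cardF expf_card expn0 expr1 addrC; congr (_ + _).
by apply: eq_bigr => i _; rewrite -exprM -expnSr.
Qed.

Lemma traceV_Fq x : (trace x)^-1 \in Fq.
Proof. by rewrite rpredV trace_Fq. Qed.

Lemma size_sum_Xq n : size (\sum_(i < n.+1) 'X^(q ^ i) : {poly F}) = (q ^ n).+1.
Proof.
elim: n => [|n IHn]; first by rewrite big_ord1 size_polyXn.
by rewrite big_ord_recr /= addrC size_polyDl size_polyXn // IHn ltnS ltn_exp2l // q_gt1.
Qed.

Lemma card_trace_fibre c : (#|[set x | trace x == c]| <= q ^ h.-1)%N.
Proof.
pose p : {poly F} := \sum_(i < h) 'X^(q ^ i) - c%:P.
have size_p : size p = (q ^ h.-1).+1.
  rewrite /p -(prednK (ltnW h_gt1)) /= size_polyDl size_sum_Xq // size_polyN.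
  by rewrite (leq_ltn_trans (size_polyC_leq1 c)) // ltnS expn_gt0 ltnW ?q_gt1.
have p_neq0 : p != 0 by rewrite -size_poly_eq0 size_p.
rewrite -ltnS -size_p (leq_trans _ (card_roots_lt p_neq0)) // ltnS.
apply/subset_leq_card/subsetP => x; rewrite !inE /root /p hornerD hornerN hornerC.
by rewrite horner_sum subr_eq0; under eq_bigr do rewrite hornerXn.
Qed.

Lemma exists_trace1 : exists y, trace y = 1.
Proof.
have /subsetPn[x _] : ~~ ([set: F] \subset [set x | trace x == 0]).
  apply: contraTN (card_trace_fibre 0) => /subset_leq_card; rewrite cardsT cardF.
  rewrite -ltnNge; apply: leq_trans.
  by rewrite ltn_exp2l ?q_gt1 // ltn_predL ltnW.
rewrite inE => Tx_neq0; exists ((trace x)^-1 * x).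
by rewrite (traceZ _ (traceV_Fq x)) mulVf.
Qed.

Lemma exists_trace_kernel : exists2 a, a != 0 & trace a = 0.
Proof.
have /injectivePn[x [y neq_xy eq_T]] : ~~ injectiveb trace.
  apply/injectiveP => T_inj; have := card_imset [set: F] T_inj.
  rewrite cardsT cardF => card_img; have : (q ^ h <= q)%N.
    rewrite -card_img (leq_trans _ card_Fq) // subset_leq_card //.
    by apply/subsetP => _ /imsetP[x _ ->]; apply: trace_Fq.
  by rewrite leqNgt -[X in (X < _)%N]expn1 ltn_exp2l ?q_gt1 ?h_gt1.
by exists (x - y); rewrite ?subr_eq0 // traceB eq_T subrr.
Qed.

Lemma Fq_trace_kernel_stable mu :
  (forall y, trace y = 0 -> trace (mu * y) = 0) -> mu \in Fq.
Proof.
move=> stable; have [y0 Ty0] := exists_trace1; set kappa := trace (mu * y0).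
have T_mu y : trace (mu * y) = kappa * trace y.
  have : trace (y - trace y * y0) = 0.
    by rewrite traceB (traceZ _ (trace_Fq y)) Ty0 mulr1 subrr.
  move/stable; rewrite mulrBr traceB mulrCA (traceZ _ (trace_Fq y)) => /eqP.
  by rewrite subr_eq0 => /eqP->; apply: mulrC.
have [->|neq_mu] := eqVneq mu kappa; first exact: trace_Fq.
have : trace ((mu - kappa) * ((mu - kappa)^-1 * y0)) = 0.
  by rewrite mulrBl traceB T_mu (traceZ _ (trace_Fq (mu * y0))) subrr.
by rewrite mulVKf ?subr_eq0 // Ty0 => /eqP; rewrite oner_eq0.
Qed.

Lemma exists_trace_pair c d :
  c != 0 -> d / c \notin Fq -> exists b, trace (b * c) = 0 /\ trace (b * d) = 1.
Proof.
move=> c_neq0 dc_notin_Fq.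
have [b /andP[/eqP Tbc /eqP Tbd] | none] :=
  pickP (fun b => (trace (b * c) == 0) && (trace (b * d) == 1)); first by exists b.
case/negP: dc_notin_Fq; apply: Fq_trace_kernel_stable => y Ty.
have {}Ty : trace (y / c * c) = 0 by rewrite divfK.
have -> : d / c * y = y / c * d by rewrite [LHS]mulrC mulrA mulrAC.
apply: contraFeq (none ((trace (y / c * d))^-1 * (y / c))) => Tyd_neq0.
rewrite -(mulrA _ (y / c) c) -(mulrA _ (y / c) d) !(traceZ _ (traceV_Fq _)).
by rewrite Ty mulr0 mulVf ?eqxx.
Qed.

Lemma exists_trace_avoiding (c s : F -> F) k1 k2 b0 :
    k1 \in Fq -> k2 \in Fq -> k1 != k2 -> (forall k, k \in Fq -> c k != 0) ->
    trace (b0 * c k1) = s k1 -> trace (b0 * c k2) = s k2 ->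
  exists b, forall k, k \in Fq -> trace (b * c k) != s k.
Proof.
move=> k1Fq k2Fq neq_k c_neq0 hit1 hit2.
pose H k := [set b | trace (b * c k) == s k].
have card_H k : k \in Fq -> (#|H k| <= q ^ h.-1)%N.
  move=> kFq; rewrite -(card_imset _ (mulIf (c_neq0 k kFq))).
  rewrite (leq_trans _ (card_trace_fibre (s k))) //.
  by apply/subset_leq_card/subsetP => z /imsetP[b]; rewrite !inE => Hb ->.
have [b /forall_inP avoid | cover] :=
  pickP (fun b => [forall k in Fq, trace (b * c k) != s k]); first by exists b.
exfalso.
pose U := \bigcup_(k in [predD1 Fq & k1]) H k.
have sTU : [set: F] \subset H k1 :|: U.
  apply/subsetP => b _; have /forall_inPn[k kFq] := negbT (cover b).
  rewrite negbK in_setU => Hb; apply/orP.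
  have [<-|neq_k1] := eqVneq k k1; [left | right]; first by rewrite inE.
  by apply/bigcupP; exists k; rewrite ?inE ?neq_k1.
have b0_HU : b0 \in H k1 :&: U.
  rewrite !inE hit1 eqxx /=; apply/bigcupP; exists k2; rewrite ?inE ?hit2 //.
  by rewrite eq_sym neq_k.
have card_U : (#|U| <= #|[predD1 Fq & k1]| * q ^ h.-1)%N.
  rewrite (leq_trans (card_bigcup_leq _ _)) // -sum_nat_const leq_sum // => k.
  by rewrite inE => /andP[_ /card_H].
have card_Fq1 : (#|[predD1 Fq & k1]| + 1 <= q)%N.
  by move: (cardD1 k1 Fq) card_Fq; rewrite k1Fq add1n addn1 => <-.
have HU_gt0 : (0 < #|H k1 :&: U|)%N by apply/card_gt0P; exists b0.
have m_gt0 : (0 < q ^ h.-1)%N by rewrite expn_gt0 ltnW ?q_gt1.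
have aM_lt_qM : (#|[predD1 Fq & k1]| * q ^ h.-1 + q ^ h.-1 <= q * q ^ h.-1)%N.
  by rewrite -mulSnr leq_mul2r -addn1 card_Fq1 orbT.
have Q_eq : (q ^ h = q * q ^ h.-1)%N by rewrite -expnS prednK // ltnW.
move: (subset_leq_card sTU) (card_H k1 k1Fq) card_U aM_lt_qM HU_gt0 m_gt0.
rewrite cardsT cardF cardsU Q_eq.
move: #|H k1| #|U| #|H k1 :&: U| (#|[predD1 Fq & k1]| * _)%N (q * _)%N.
lia.
Qed.

Definition trace_fibre1 : {set F} := [set y | trace y == 1].

Lemma card_normal_form_set (f g : F -> 'M[F]_3) (P : 'M[F]_3) :
  (#|[set f x | x : F] :|: [set g y | y in trace_fibre1] :|: [set P]|
     <= q ^ h + q ^ h.-1 + 1)%N.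
Proof.
rewrite (leq_trans (leq_card_setU _ _)) // cards1 leq_add2r.
rewrite (leq_trans (leq_card_setU _ _)) // leq_add //.
  by rewrite (leq_trans (leq_imset_card _ _)) // cardF.
by rewrite (leq_trans (leq_imset_card _ _)) // card_trace_fibre.
Qed.

Lemma card_PG2_points_ge : (2 * (q ^ h + q ^ h.-1 + 1) <= #|PG2_points F|)%N.
Proof.
rewrite (leq_trans _ (card_PG2_points F)) // cardF.
have -> : (q ^ h = q * q ^ h.-1)%N by rewrite -expnS prednK // ltnW.
have q_le_m : (q <= q ^ h.-1)%N.
  by rewrite -[X in (X <= _)%N]expn1 leq_exp2l ?q_gt1 // -ltnS (prednK (ltnW h_gt1)).
move: q_le_m; move: (q ^ h.-1)%N => m q_le_m.
have m_lt_Q : (m < q * m)%N.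
  by rewrite ltn_Pmull ?q_gt1 // (leq_trans _ q_le_m) // ltnW ?q_gt1.
have Q4 : (2 * 2 <= q * m)%N by rewrite leq_mul ?q_gt1 // (leq_trans q_gt1).
have : (4 * (q * m) <= q * m * (q * m))%N by rewrite leq_mul2r Q4 orbT.
rewrite -mulnn; move: m_lt_Q Q4; move: (q * m)%N => Q; lia.
Qed.

Definition V1 (u : F * F) : 'rV[F]_3 := vec3 u.1 (trace u.1) u.2.

Definition B1 : {set 'M[F]_3} := param_points V1 Fq.

Lemma B1_blocking : t_fold_blocking_set 1 B1.
Proof.
apply: param_points_blocking; rewrite ?rpred0 ?rpred1 ?rpredN1 //.
  by case=> x t [x' t']; rewrite /V1 /= vec3B traceB.
by case=> x t [x' t'] /vec3_inj[/= -> _ ->].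
Qed.

Definition B1_normal : {set 'M[F]_3} :=
  [set <<vec3 x (trace x) 1>>%MS | x : F] :|:
  [set <<vec3 y 1 0>>%MS | y in trace_fibre1] :|: [set <<vec3 1 0 0>>%MS].

Lemma B1_sub_normal : B1 \subset B1_normal.
Proof.
apply/subsetP => P /imsetP[[x t]]; rewrite inE /= => /andP[tFq V_neq0] ->.
rewrite /V1 /= in V_neq0 *; have [t0|t_neq0] := eqVneq t 0; last first.
  apply/setUP; left; apply/setUP; left; apply/imsetP; exists (t^-1 * x) => //.
  by rewrite -(genmx_scale _ (invr_neq0 t_neq0)) scale_vec3 mulVf // traceZ ?rpredV.
rewrite t0 {t t0 tFq} in V_neq0 *.
have [Tx0|Tx_neq0] := eqVneq (trace x) 0.
  have x_neq0 : x != 0.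
    by apply: contraNneq V_neq0 => ->; rewrite trace0 vec3_eq0 !eqxx.
  apply/setUP; right; apply/set1P.
  by rewrite Tx0 -(genmx_scale (vec3 1 0 0) x_neq0) scale_vec3 mulr1 mulr0.
apply/setUP; left; apply/setUP; right; apply/imsetP; exists ((trace x)^-1 * x).
  by rewrite inE (traceZ _ (traceV_Fq x)) mulVf.
by rewrite -(genmx_scale _ (invr_neq0 Tx_neq0)) scale_vec3 mulVf // mulr0.
Qed.

Section Construction.
Variables alpha rho beta : F.
Hypothesis alpha_neq0 : alpha != 0.
Hypothesis trace_alphaV : trace alpha^-1 = 0.
Hypothesis trace_rho_alpha : trace (rho / alpha) = 1.
Hypothesis beta_avoiding :
  forall k, k \in Fq -> trace (beta * (alpha / (rho - k))) != -1 - k.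

Lemma rho_notin_Fq : rho \notin Fq.
Proof.
apply/negP => rhoFq; move: trace_rho_alpha.
by rewrite traceZ // trace_alphaV mulr0 => /eqP; rewrite eq_sym oner_eq0.
Qed.

Lemma rho_neq0 : rho != 0.
Proof. by apply: contraNneq rho_notin_Fq => ->; apply: rpred0. Qed.

Definition G z := rho * z + alpha * trace (beta * z).

Lemma G0 : G 0 = 0.
Proof. by rewrite /G !(mulr0, trace0, addr0). Qed.

Lemma GB z z' : G (z - z') = G z - G z'.
Proof. by rewrite /G !mulrBr traceB mulrBr; ring. Qed.

Lemma GZ k z : k \in Fq -> G (k * z) = k * G z.
Proof. by move=> kFq; rewrite /G [beta * _]mulrCA (traceZ _ kFq); ring. Qed.

(* Equality would force trace (beta * (alpha / (rho - k))) = -1 - k for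
   k := trace w^-1, which the choice of beta excludes. *)
Lemma G_add_alpha_neq w : G w + alpha != w * trace w^-1.
Proof.
have [->|w_neq0] := eqVneq w 0.
  by rewrite /G !(mulr0, trace0, add0r, mul0r).
have [k Tw kFq] : exists2 k, trace w^-1 = k & k \in Fq.
  by exists (trace w^-1); rewrite ?trace_Fq.
have [j Tbw jFq] : exists2 j, trace (beta * w) = j & j \in Fq.
  by exists (trace (beta * w)); rewrite ?trace_Fq.
rewrite /G Tw Tbw; apply/eqP => Ew.
have k_rho : k - rho != 0 by rewrite subr_eq0; apply: contraNneq rho_notin_Fq => <-.
have w_k_rho : w * (k - rho) = alpha * (1 + j) by rewrite mulrBr -Ew; ring.
have j1_neq0 : 1 + j != 0.
  by apply: contra_neq (mulf_neq0 w_neq0 k_rho) => j1; rewrite w_k_rho j1 mulr0.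
have wE : w = alpha * (1 + j) / (k - rho) by rewrite -w_k_rho mulfK.
have wV : w^-1 = (1 + j)^-1 * (k / alpha - rho / alpha).
  by rewrite wE; field; rewrite alpha_neq0 j1_neq0 k_rho.
have k_j : k = - (1 + j)^-1.
  rewrite -{1}Tw wV traceZ ?rpredV ?rpredD ?rpred1 // traceB traceZ //.
  by rewrite trace_alphaV trace_rho_alpha mulr0 sub0r mulrN1.
have rho_k : rho - k != 0 by rewrite -oppr_eq0 opprB.
set t := trace (beta * (alpha / (rho - k))).
have j_t : j = - (1 + j) * t.
  have j1Fq : - (1 + j) \in Fq by rewrite rpredN rpredD ?rpred1.
  rewrite -{1}Tbw -(traceZ _ j1Fq); congr trace; rewrite wE.
  by field; rewrite rho_k k_rho.
have : t = -1 - k.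
  have -> : t = - j / (1 + j) by rewrite {1}j_t; field; rewrite j1_neq0.
  by rewrite k_j; field; rewrite j1_neq0.
by apply/eqP; apply: beta_avoiding.
Qed.

Definition V2 (u : F * F) : 'rV[F]_3 := vec3 u.2 (G u.1 + alpha * u.2) u.1.

Definition B2 : {set 'M[F]_3} := param_points V2 Fq.

Lemma B2_blocking : t_fold_blocking_set 1 B2.
Proof.
apply: param_points_blocking; rewrite ?rpred0 ?rpred1 ?rpredN1 //.
  by case=> z s [z' s']; rewrite /V2 /= vec3B GB; congr vec3; ring.
by case=> z s [z' s'] /vec3_inj[/= -> _ ->].
Qed.

Definition B2_normal : {set 'M[F]_3} :=
  [set <<vec3 1 (G w + alpha)%R w>>%MS | w : F] :|:
  [set <<vec3 0 (rho + alpha * beta / y)%R 1>>%MS | y in trace_fibre1] :|: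
  [set <<vec3 0 rho 1>>%MS].

Lemma B2_sub_normal : B2 \subset B2_normal.
Proof.
apply/subsetP => P /imsetP[[z s]]; rewrite inE /= => /andP[sFq V_neq0] ->.
rewrite /V2 /= in V_neq0 *; have [s0|s_neq0] := eqVneq s 0; last first.
  apply/setUP; left; apply/setUP; left; apply/imsetP; exists (s^-1 * z) => //.
  rewrite -(genmx_scale _ (invr_neq0 s_neq0)) scale_vec3 GZ ?rpredV //.
  by congr <<vec3 _ _ _>>%MS; field.
rewrite s0 {s s0 sFq} mulr0 addr0 in V_neq0 *.
have z_neq0 : z != 0 by apply: contraNneq V_neq0 => ->; rewrite G0 vec3_eq0 !eqxx.
rewrite -(genmx_scale _ (invr_neq0 z_neq0)) scale_vec3 mulr0 mulVf //.
have [Tbz0|Tbz_neq0] := eqVneq (trace (beta * z)) 0.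
  by apply/setUP; right; apply/set1P; congr <<vec3 _ _ _>>%MS; rewrite /G Tbz0; field.
apply/setUP; left; apply/setUP; right; apply/imsetP.
exists ((trace (beta * z))^-1 * (beta * z)).
  by rewrite inE (traceZ _ (traceV_Fq _)) mulVf.
have beta_neq0 : beta != 0 by apply: contraNneq Tbz_neq0 => ->; rewrite mul0r trace0.
by congr <<vec3 _ _ _>>%MS; rewrite /G; field; rewrite beta_neq0 z_neq0 Tbz_neq0.
Qed.

Lemma rho_add_neq0 y : trace y = 1 -> rho + alpha * beta / y != 0.
Proof.
move=> Ty; apply/eqP => rho_y.
have y_neq0 : y != 0.
  by apply: contra_eq_neq Ty => ->; rewrite trace0 eq_sym oner_neq0.
have beta_neq0 : beta != 0.
  by apply: contra_neq rho_neq0 => beta0; move: rho_y; rewrite beta0 mulr0 mul0r addr0.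
have rho_eq : rho = - (alpha * beta / y) by apply/eqP; rewrite -addr_eq0 rho_y.
move: (beta_avoiding (rpred0 _)); rewrite !subr0.
have -> : beta * (alpha / rho) = - y.
  by rewrite rho_eq; field; rewrite y_neq0 oppr_eq0 mulf_neq0.
by rewrite traceN Ty eqxx.
Qed.

Lemma disjoint_normal : [disjoint B1_normal & B2_normal].
Proof.
rewrite disjoint_subset; apply/subsetP => P P1; rewrite inE; apply/negP => P2.
move: P1 P2; rewrite /B1_normal /B2_normal.
case/setUP => [/setUP[]|/set1P->] => [/imsetP[x _ ->]|/imsetP[y Ty ->]|];
  case/setUP => [/setUP[]|/set1P] => [/imsetP[w _]|/imsetP[y' Ty' ]|];
  move=> /genmx_vec3P[l [e1 e2 e3]].
- have l_neq0 : l != 0.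
    by apply/eqP => l0; move: e3; rewrite l0 mul0r => /eqP; rewrite oner_eq0.
  have w_eq : w = l^-1 by apply: (mulfI l_neq0); rewrite -e3 mulfV.
  rewrite mulr1 in e1; subst x.
  move/eqP: (G_add_alpha_neq w); apply.
  by rewrite [in RHS]w_eq invrK e2 mulKf.
- rewrite mulr1 in e3; subst l; rewrite mulr0 in e1; subst x.
  rewrite trace0 mul1r in e2.
  by move: Ty'; rewrite inE => /eqP/rho_add_neq0; rewrite -e2 eqxx.
- rewrite mulr1 in e3; subst l; rewrite mulr0 in e1; subst x.
  rewrite trace0 mul1r in e2.
  by move: rho_neq0; rewrite -e2 eqxx.
- have l_neq0 : l != 0.
    by apply/eqP => l0; move: e2; rewrite l0 mul0r => /eqP; rewrite oner_eq0.
  move/esym/eqP: e3; rewrite mulf_eq0 (negbTE l_neq0) /= => /eqP w0.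
  rewrite w0 G0 add0r in e2; rewrite mulr1 in e1.
  have y_eq : y = alpha^-1.
    by rewrite e1; apply: (mulIf alpha_neq0); rewrite mulVf // -e2.
  by move: Ty; rewrite inE y_eq trace_alphaV eq_sym oner_eq0.
- by rewrite mulr1 in e3; move: e2; rewrite -e3 mul0r => /eqP; rewrite oner_eq0.
- by rewrite mulr1 in e3; move: e2; rewrite -e3 mul0r => /eqP; rewrite oner_eq0.
- rewrite mulr1 in e1; subst l; rewrite mul1r in e3; subst w.
  rewrite G0 add0r mul1r in e2.
  by move: alpha_neq0; rewrite -e2 eqxx.
- by move: e1; rewrite mulr0 => /eqP; rewrite oner_eq0.
- by move: e1; rewrite mulr0 => /eqP; rewrite oner_eq0.
Qed.

Lemma two_fold_blocking_set_of_params : exists B : {set 'M[F]_3},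
  t_fold_blocking_set 2 B /\ #|B| = (2 * (q ^ h + q ^ h.-1 + 1))%N.
Proof.
have disjB : [disjoint B1 & B2].
  exact: disjointW B1_sub_normal B2_sub_normal disjoint_normal.
have block12 := t_fold_blocking_setU B1_blocking B2_blocking disjB.
have card_B12 : (#|B1 :|: B2| <= 2 * (q ^ h + q ^ h.-1 + 1))%N.
  rewrite (leq_trans (leq_card_setU _ _)) // mul2n -addnn leq_add //.
    exact: leq_trans (subset_leq_card B1_sub_normal) (card_normal_form_set _ _ _).
  exact: leq_trans (subset_leq_card B2_sub_normal) (card_normal_form_set _ _ _).
have [B [sB12B sBP cardB]] := exists_set_between (proj1 block12)
  (introT andP (conj card_B12 card_PG2_points_ge)).
by exists B; split=> //; apply: t_fold_blocking_setS block12 sB12B sBP.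
Qed.

End Construction.

Lemma exists_construction_params : exists alpha rho beta : F, [/\ alpha != 0,
  trace alpha^-1 = 0, trace (rho / alpha) = 1 &
  forall k, k \in Fq -> trace (beta * (alpha / (rho - k))) != -1 - k].
Proof.
have [a a_neq0 Ta] := exists_trace_kernel; have [y0 Ty0] := exists_trace1.
pose alpha := a^-1; pose rho := alpha * y0.
have alpha_neq0 : alpha != 0 by rewrite invr_eq0.
have T_alphaV : trace alpha^-1 = 0 by rewrite invrK.
have T_rho_alpha : trace (rho / alpha) = 1 by rewrite mulrC mulKf.
have rho_notin := rho_notin_Fq T_alphaV T_rho_alpha.
pose c k := alpha / (rho - k).
have c_neq0 k : k \in Fq -> c k != 0.
  move=> kFq; rewrite mulf_neq0 ?invr_eq0 // subr_eq0.
  by apply: contraNneq rho_notin => ->.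
have Fq_N1 : -1 \in Fq := rpredN1 _.
have [b [Tbc Tbd]] : exists b, trace (b * c (-1)) = 0 /\ trace (b * c 0) = 1.
  apply: exists_trace_pair; first exact: c_neq0.
  have rho_neq0 : rho != 0 by apply: contraNneq rho_notin => ->; apply: rpred0.
  have rho1_neq0 : rho + 1 != 0.
    by rewrite addr_eq0; apply: contraNneq rho_notin => ->.
  have -> : c 0 / c (-1) = 1 + rho^-1.
    by rewrite /c subr0 opprK; field; rewrite rho_neq0 rho1_neq0 alpha_neq0.
  apply: contra rho_notin => r1.
  by rewrite -rpredV -[rho^-1](addKr 1) rpredD ?rpredN ?rpred1.
have N1_neq0 : -1 != 0 :> F by rewrite oppr_eq0 oner_eq0.
have hit1 : trace (- b * c (-1)) = -1 - -1 by rewrite mulNr traceN Tbc oppr0 subrr.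
have hit2 : trace (- b * c 0) = -1 - 0 by rewrite mulNr traceN Tbd subr0.
have [beta avoid] := @exists_trace_avoiding c (fun k => -1 - k) _ _ _
  Fq_N1 (rpred0 _) N1_neq0 c_neq0 hit1 hit2.
by exists alpha, rho, beta.
Qed.

Lemma exists_two_fold_blocking_set : exists B : {set 'M[F]_3},
  t_fold_blocking_set 2 B /\ #|B| = (2 * (q ^ h + q ^ h.-1 + 1))%N.
Proof.
have [alpha [rho [beta [alpha_neq0 T_alphaV T_rho_alpha beta_avoiding]]]] :=
  exists_construction_params.
exact: two_fold_blocking_set_of_params alpha_neq0 T_alphaV T_rho_alpha beta_avoiding.
Qed.

End Trace.

Local Close Scope ring_scope.

Theorem corollary3p6 (q h : nat) (F : finFieldType) :
  is_prime_power q -> (2 <= h)%N -> #|F| = (q ^ h)%N ->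
  exists B : {set 'M[F]_3},
    @t_fold_blocking_set F 2 B /\ #|B| = (2 * (q ^ h + q ^ h.-1 + 1))%N.
Proof.
move=> [p [k [p_prime [_ ->]]]] h_gt1 cardF.
have pF : p \in [pchar F]%R.
  by apply: (@card_finPcharP _ _ (k * h)); rewrite // cardF expnM.
have q_pchar : [pchar F]%R.-nat (p ^ k) by rewrite pnatX pnatE // pF.
exact: exists_two_fold_blocking_set q_pchar cardF h_gt1.
Qed.
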